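(* Let \(X\) be a nonempty set, let \(\Phi\) be a mapping with domain \(X^{2}\), and let \(a_0 \in \Phi(X^{2})\). Then \(\Phi\) is \(a_0\)-coherent if and only if the fiber \(R := \Phi^{-1}(a_0)\) is an equivalence relation on \(X\) and the partition \(P_R \otimes P_R^1\) of \(X^{2}\) is a refinement of the partition \(P_{\Phi^{-1}} := \{\Phi^{-1}(b) \colon b \in \Phi(X^{2})\}\) of \(X^2\).
   Context: \(\Phi(X^2)\) is the range of \(\Phi\) and \(\Phi^{-1}(b)=\{\langle x,y\rangle\in X^2:\Phi(x,y)=b\}\). \(\Phi\) is strongly consistent with an equivalence relation \(R\) on \(X\) if \(\langle x_1,x_2\rangle\in R\) and \(\langle x_3,x_4\rangle\in R\) imply \(\Phi(x_1,x_3)=\Phi(x_2,x_4)\); \(\Phi\) is \(a_0\)-coherent if \(\Phi^{-1}(a_0)\) is an equivalence relation on \(X\) and \(\Phi\) is strongly consistent with it. For an equivalence relation \(R\) on \(X\), \(P_R=\{X_j: j\in J\}\) is the partition of \(X\) into the (distinct) equivalence classes of \(R\), and \(P_R\otimes P_R^1\) is the partition of \(X^2\) whose blocks are the set \(\bigcup_{j\in J}X_j^2\) together with all sets \(X_{j_1}\times X_{j_2}\) for distinct \(j_1,j_2\in J\). A partition \(P_1\) of a set is a refinement of a partition \(P_2\) of the same set if every block of \(P_1\) is contained in some block of \(P_2\). *)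

(* sets are predicates, set equality is pointwise iff. *)
From Stdlib Require Import Relation_Definitions.

Set Implicit Arguments.

Section Defs.
Variables (X B : Type).

Definition fiber (Phi : X -> X -> B) (b : B) : relation X :=
  fun x y => Phi x y = b.

Definition in_range (Phi : X -> X -> B) (b : B) : Prop :=
  exists x y, Phi x y = b.

Definition strongly_consistent (Phi : X -> X -> B) (R : relation X) : Prop :=
  forall x1 x2 x3 x4, R x1 x2 -> R x3 x4 -> Phi x1 x3 = Phi x2 x4.

Definition coherent (Phi : X -> X -> B) (a0 : B) : Prop :=
  equivalence X (fiber Phi a0) /\ strongly_consistent Phi (fiber Phi a0).

Definition eq_class (R : relation X) (C : X -> Prop) : Prop :=
  exists x, forall y, C y <-> R x y.

Definition PR_tensor (R : relation X) (A : X * X -> Prop) : Prop :=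
  (forall p, A p <-> exists C, eq_class R C /\ C (fst p) /\ C (snd p))
  \/ (exists C1 C2, eq_class R C1 /\ eq_class R C2 /\
        ~ (forall y, C1 y <-> C2 y) /\
        forall p, A p <-> (C1 (fst p) /\ C2 (snd p))).

Definition P_fibers (Phi : X -> X -> B) (A : X * X -> Prop) : Prop :=
  exists b, in_range Phi b /\ forall p, A p <-> Phi (fst p) (snd p) = b.

Definition refines (P1 P2 : (X * X -> Prop) -> Prop) : Prop :=
  forall A, P1 A -> exists A', P2 A' /\ forall p, A p -> A' p.

End Defs.

(** Both conditions say that [Phi] is constant on every block of [P_R ⊗ P_R^1],
    where [R] is the fiber of [a0].  On an off-diagonal block [X_j1 × X_j2] this
    constancy is exactly strong consistency with [R]; on the diagonal block, which
    is [R] itself, it is automatic because [Phi] takes the value [a0] there.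
    Conversely, two [R]-related pairs [(x1, x3)] and [(x2, x4)] lie either both in
    the diagonal block (if [R x1 x3]) or both in the off-diagonal block
    [R x1 × R x3], so block constancy gives strong consistency back. *)

From Stdlib Require Import Relation_Definitions Classical.

Set Implicit Arguments.

Section Blocks.
Variables (X B : Type) (Phi : X -> X -> B).

Definition constant_on (A : X * X -> Prop) : Prop :=
  forall p q, A p -> A q -> Phi (fst p) (snd p) = Phi (fst q) (snd q).

Lemma fiber_constant (a0 : B) : constant_on (fun p => fiber Phi a0 (fst p) (snd p)).
Proof. intros p q Hp Hq. unfold fiber in *. congruence. Qed.

(* An empty block is put inside the fiber of [b0]. *)
Lemma refines_fibersP (P : (X * X -> Prop) -> Prop) (b0 : B) :
  in_range Phi b0 ->
  refines P (P_fibers Phi) <-> forall A, P A -> constant_on A.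
Proof.
  intros Hb0; split.
  - intros Href A HA p q Hp Hq.
    destruct (Href A HA) as [A' [[b [_ Hb]] Hsub]].
    apply Hsub, Hb in Hp. apply Hsub, Hb in Hq. congruence.
  - intros Hconst A HA.
    destruct (classic (exists p, A p)) as [[p Hp] | Hempty].
    + exists (fun q => Phi (fst q) (snd q) = Phi (fst p) (snd p)). split.
      * exists (Phi (fst p) (snd p)). split; [now exists (fst p), (snd p) | tauto].
      * intros q Hq. exact (Hconst A HA q p Hq Hp).
    + exists (fun q => Phi (fst q) (snd q) = b0). split.
      * exists b0. split; [exact Hb0 | tauto].
      * intros q Hq. exfalso. apply Hempty. now exists q.
Qed.

Section Tensor.
Variable R : relation X.
Hypothesis HR : equivalence X R.

Lemma eq_class_rel (x : X) : eq_class R (R x).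
Proof. exists x. tauto. Qed.

Lemma eq_class_related {C : X -> Prop} {y z : X} :
  eq_class R C -> C y -> C z -> R y z.
Proof.
  destruct HR as [_ Htrans Hsym].
  intros [x Hx] Hy Hz. apply Hx in Hy. apply Hx in Hz.
  exact (Htrans _ _ _ (Hsym _ _ Hy) Hz).
Qed.

Lemma diag_blockE (p : X * X) :
  (exists C, eq_class R C /\ C (fst p) /\ C (snd p)) <-> R (fst p) (snd p).
Proof.
  split.
  - intros [C [HC [H1 H2]]]. exact (eq_class_related HC H1 H2).
  - intros H. exists (R (fst p)). split; [apply eq_class_rel|].
    split; [apply HR | exact H].
Qed.

Lemma PR_tensor_diag : PR_tensor R (fun p => R (fst p) (snd p)).
Proof. left. intros p. symmetry. apply diag_blockE. Qed.

Lemma PR_tensor_offdiag (x y : X) :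
  ~ R x y -> PR_tensor R (fun p => R x (fst p) /\ R y (snd p)).
Proof.
  intros Hxy. right. exists (R x), (R y).
  split; [apply eq_class_rel|]. split; [apply eq_class_rel|].
  split; [|tauto].
  intros Heq. apply Hxy, Heq, HR.
Qed.

Lemma tensor_constantP :
  (forall A, PR_tensor R A -> constant_on A) <->
  constant_on (fun p => R (fst p) (snd p)) /\ strongly_consistent Phi R.
Proof.
  pose proof HR as [Hrefl Htrans Hsym].
  split.
  - intros Hconst. split; [exact (Hconst _ PR_tensor_diag)|].
    intros x1 x2 x3 x4 H12 H34.
    destruct (classic (R x1 x3)) as [H13 | H13].
    + apply (Hconst _ PR_tensor_diag (x1, x3) (x2, x4)); [exact H13|].
      exact (Htrans _ _ _ (Htrans _ _ _ (Hsym _ _ H12) H13) H34).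
    + apply (Hconst _ (PR_tensor_offdiag H13) (x1, x3) (x2, x4)); simpl; auto.
  - intros [Hdiag Hcons] A [HA | [C1 [C2 [HC1 [HC2 [_ HA]]]]]] p q Hp Hq.
    + apply HA, diag_blockE in Hp. apply HA, diag_blockE in Hq. exact (Hdiag p q Hp Hq).
    + apply HA in Hp as [Hp1 Hp2]. apply HA in Hq as [Hq1 Hq2].
      apply Hcons; [exact (eq_class_related HC1 Hp1 Hq1)
                  | exact (eq_class_related HC2 Hp2 Hq2)].
Qed.

End Tensor.
End Blocks.

Theorem theorem2p10 (X B : Type) (Phi : X -> X -> B) (a0 : B) :
  inhabited X -> in_range Phi a0 ->
  (coherent Phi a0 <->
   (equivalence X (fiber Phi a0) /\
    refines (PR_tensor (fiber Phi a0)) (P_fibers Phi))).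
Proof.
  intros _ Ha0. unfold coherent.
  split; intros [Hequiv H]; split; try exact Hequiv.
  - apply (refines_fibersP _ Ha0), (tensor_constantP Phi Hequiv).
    split; [apply fiber_constant | exact H].
  - apply (tensor_constantP Phi Hequiv), (refines_fibersP _ Ha0), H.
Qed.
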